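(* Let $R$ be a $*$-ring, let $a\in R$, and let $n\geq 3$ be an integer. Then $a$ is dual core invertible if and only if there exists $c\in R$ such that $a^{\circ}=cR$ and $v=a^{n}a^{*}+cc^{*}$ is invertible. In this case $$a_{\mathrm{core}}=a^{*}v^{-1}a^{n-1}.$$
   Context: A $*$-ring is an associative ring with identity $1$ and an involution $*$, i.e. $(a^* )^*=a$, $(ab)^*=b^*a^*$ and $(a+b)^*=a^*+b^*$. For $a\in R$: $a^{\circ}=\{x\in R : ax=0\}$ and $cR=\{cx : x\in R\}$. An element $a$ is dual core invertible if there is $x\in R$ with $(xa)^*=xa$, $x^2a=x$ and $a^2x=a$. Such an $x$ is unique and denoted $a_{\mathrm{core}}$. ''Invertible'' means having a two-sided inverse in $R$. *)

From HB Require Import structures.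
From mathcomp Require Import all_boot all_order all_algebra.
Set Implicit Arguments. Unset Strict Implicit. Unset Printing Implicit Defensive.
Import GRing.Theory.
Local Open Scope ring_scope.

Definition involution (R : nzRingType) (star : R -> R) : Prop :=
  (forall a, star (star a) = a) /\
  (forall a b, star (a * b) = star b * star a) /\
  (forall a b, star (a + b) = star a + star b).

Definition is_dual_core_inverse (R : nzRingType) (star : R -> R) (a x : R) : Prop :=
  star (x * a) = x * a /\ x ^+ 2 * a = x /\ a ^+ 2 * x = a.

Definition dual_core_invertible (R : nzRingType) (star : R -> R) (a : R) : Prop :=
  exists x, is_dual_core_inverse star a x.

Definition rann_eq_principal (R : nzRingType) (a c : R) : Prop :=
  forall y : R, a * y = 0 <-> exists z : R, y = c * z.

From mathcomp Require Import all_boot all_order all_algebra.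
Import GRing.Theory.
Local Open Scope ring_scope.

(* Forward: if x is a dual core inverse of a, then p = 1 - xa is a Hermitian
   idempotent with a° = pR, and v = a^n a* + p has the two-sided inverse
   x* (x^n - a* (1 - ax)) + (1 - ax).
   Backward: let w be a left inverse of v = a^n a* + cc*, where ac = 0. Since
   also c*a* = 0, a^(n-1) v* = v a*^(n-1), hence w a^(n-1) = a*^(n-1) w* and
   x := a* w a^(n-1) = a*^n w*. Transposing wv = 1 gives a a*^n w* = 1 - cc*w*,
   whence a^2 x = a; then x^2 a = x because a^(n-1) x = a^(n-2), which is where
   n >= 3 is needed. Uniqueness: any dual core inverse x satisfies xc = 0, so
   v x* x = a^(n-1) and x = (xa)* x = a* (x* x) = a* w a^(n-1). *)

Set Implicit Arguments.
Unset Strict Implicit.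
Unset Printing Implicit Defensive.

Lemma exprS_mul_inner (R : nzRingType) (a x : R) (k : nat) :
  a ^+ 2 * x = a -> (0 < k)%N -> a ^+ k.+1 * x = a ^+ k.
Proof.
by case: k => // k aax _; rewrite -(addn2 k) exprD -mulrA aax -exprSr.
Qed.

Lemma rann_principal_mul0 (R : nzRingType) (a c : R) :
  rann_eq_principal a c -> a * c = 0.
Proof. by move=> Hac; apply/Hac; exists 1; rewrite mulr1. Qed.

Section StarRing.

Variables (R : nzRingType) (star : R -> R).
Hypothesis Hstar : involution star.

Lemma starK : involutive star. Proof. by case: Hstar. Qed.

Lemma starM a b : star (a * b) = star b * star a.
Proof. by case: Hstar => _ []. Qed.

Lemma starD a b : star (a + b) = star a + star b.
Proof. by case: Hstar => _ []. Qed.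

Lemma star0 : star 0 = 0.
Proof. by apply/(addrI (star 0)); rewrite -starD !addr0. Qed.

Lemma starB a b : star (a - b) = star a - star b.
Proof.
suff starN : star (- b) = - star b by rewrite starD starN.
by apply/(addrI (star b)); rewrite -starD !subrr star0.
Qed.

Lemma star1 : star 1 = 1.
Proof. by have := starM (star 1) 1; rewrite !mulr1 starK mulr1 => <-. Qed.

Lemma starX a k : star (a ^+ k) = star a ^+ k.
Proof. by elim: k => [|k IH]; rewrite ?star1 // exprS starM IH exprSr. Qed.

Section Inverse.

Variables a x : R.
Hypothesis Hx : is_dual_core_inverse star a x.

Lemma dcinv_herm : star (x * a) = x * a. Proof. by case: Hx. Qed.

Lemma dcinv_sq_left : x * x * a = x.
Proof. by case: Hx => _ [xxa _]; rewrite -expr2. Qed.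

Lemma dcinv_sq_right : a * a * x = a.
Proof. by case: Hx => _ [_ aax]; rewrite -expr2. Qed.

Lemma dcinv_inner : a * x * a = a.
Proof.
by rewrite -{1}dcinv_sq_right -!mulrA (mulrA x) dcinv_sq_left mulrA dcinv_sq_right.
Qed.

Lemma dcinv_outer : x * a * x = x.
Proof.
by rewrite -{1}dcinv_sq_left -!mulrA (mulrA a) dcinv_sq_right mulrA dcinv_sq_left.
Qed.

Lemma dcinv_herm_mul_star : x * a * star a = star a.
Proof. by rewrite -{1}dcinv_herm -starM mulrA dcinv_inner. Qed.

Lemma dcinv_herm_mul_star_dcinv : x * a * star x = star x.
Proof. by rewrite -{1}dcinv_herm -starM mulrA dcinv_sq_left. Qed.

Lemma star_dcinv_mul_herm : star x * star a * (x * a) = x * a.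
Proof.
by rewrite -starM -dcinv_herm -starM mulrA -(mulrA x a) -mulrA dcinv_sq_right.
Qed.

Lemma exp_dcinv_mul_herm k : x ^+ k.+1 * (x * a) = x ^+ k.+1.
Proof. by rewrite exprSr -mulrA (mulrA x) dcinv_sq_left. Qed.

Lemma exp_mul_dcinv k : a ^+ k.+1 * (a * x) = a ^+ k.+1.
Proof. by rewrite exprSr -mulrA (mulrA a) dcinv_sq_right. Qed.

Lemma dcinv_mul_exp k : a * x * a ^+ k.+1 = a ^+ k.+1.
Proof. by rewrite exprS mulrA dcinv_inner. Qed.

Lemma exp_dcinv_mul_exp k : x ^+ k.+1 * a ^+ k.+1 = x * a.
Proof.
elim: k => [|k IH]; first by rewrite !expr1.
by rewrite (exprSr x) (exprS a) mulrA -(mulrA _ x a) exp_dcinv_mul_herm IH.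
Qed.

Lemma exp_mul_dcinv_exp k : a ^+ k.+1 * x ^+ k.+1 = a * x.
Proof.
elim: k => [|k IH]; first by rewrite !expr1.
by rewrite (exprSr a) (exprS x) mulrA -(mulrA _ a x) exp_mul_dcinv IH.
Qed.

Lemma rann_dcinv : rann_eq_principal a (1 - x * a).
Proof.
move=> y; split => [ay0 | [z ->]].
  by exists y; rewrite mulrBl mul1r -mulrA ay0 mulr0 subr0.
by rewrite mulrA mulrBr mulr1 mulrA dcinv_inner subrr mul0r.
Qed.

Lemma dcinv_proj_norm : (1 - x * a) * star (1 - x * a) = 1 - x * a.
Proof.
rewrite starB star1 dcinv_herm mulrBr mulr1 mulrBl mul1r.
by rewrite mulrA dcinv_outer subrr subr0.
Qed.

Definition dcinv_vinv k := star x * (x ^+ k.+1 - star a * (1 - a * x)) + (1 - a * x).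

Lemma dcinv_mulVv k :
  dcinv_vinv k * (a ^+ k.+1 * star a + (1 - x * a) * star (1 - x * a)) = 1.
Proof.
rewrite dcinv_proj_norm; set v := _ + _.
have xnv : x ^+ k.+1 * v = star a.
  rewrite /v mulrDr mulrA exp_dcinv_mul_exp dcinv_herm_mul_star.
  by rewrite mulrBr mulr1 exp_dcinv_mul_herm subrr addr0.
have qv : (1 - a * x) * v = 1 - x * a.
  rewrite /v mulrDr mulrA mulrBl mul1r dcinv_mul_exp subrr mul0r add0r.
  rewrite mulrBl mul1r mulrBr mulr1 mulrA -(mulrA a x x) -mulrA dcinv_sq_left.
  by rewrite subrr subr0.
rewrite /dcinv_vinv mulrDl qv -mulrA mulrBl xnv -mulrA qv.
rewrite -{1}(mulr1 (star a)) -mulrBr subKr mulrA star_dcinv_mul_herm.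
exact: subrKC.
Qed.

Lemma dcinv_mulvV k :
  (a ^+ k.+1 * star a + (1 - x * a) * star (1 - x * a)) * dcinv_vinv k = 1.
Proof.
rewrite dcinv_proj_norm; set v := _ + _.
have vsx : v * star x = a ^+ k.+1.
  rewrite /v mulrDl -mulrA -starM dcinv_herm exprSr -mulrA (mulrA a x) dcinv_inner.
  by rewrite mulrBl mul1r dcinv_herm_mul_star_dcinv subrr addr0.
have vq : v * (1 - a * x) = a ^+ k.+1 * star a * (1 - a * x) + (1 - a * x).
  rewrite /v mulrDl; congr (_ + _).
  rewrite mulrBl mul1r mulrBr mulr1 mulrA -(mulrA x a a) -mulrA dcinv_sq_right.
  by rewrite subrr subr0.
rewrite /dcinv_vinv mulrDr mulrA vsx vq mulrBr exp_mul_dcinv_exp mulrA.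
by rewrite addrA subrK addrC subrK.
Qed.

End Inverse.

Section LeftInverse.

Variables (a c w : R) (k : nat).
Hypothesis Hac : a * c = 0.
Hypothesis Hw : w * (a ^+ k.+2 * star a + c * star c) = 1.

Lemma mul_starv_starw : (a * star a ^+ k.+2 + c * star c) * star w = 1.
Proof.
by have := congr1 star Hw; rewrite star1 starM starD (starM (a ^+ _)) starM starX !starK.
Qed.

Lemma inv_intertwine : w * a ^+ k.+1 = star a ^+ k.+1 * star w.
Proof.
have intertwine : a ^+ k.+1 * (a * star a ^+ k.+2 + c * star c) =
                  (a ^+ k.+2 * star a + c * star c) * star a ^+ k.+1.
  have ac0 : a ^+ k.+1 * c = 0 by rewrite exprSr -mulrA Hac mulr0.
  have ca0 : star c * star a ^+ k.+1 = 0 by rewrite -starX -starM ac0 star0.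
  rewrite mulrDr mulrDl !mulrA ac0 -(mulrA c) ca0 !(mul0r, mulr0, addr0).
  by rewrite -exprSr -mulrA -exprS.
rewrite -[LHS]mulr1 -mul_starv_starw mulrA -(mulrA w) intertwine.
by rewrite mulrA Hw mul1r.
Qed.

Lemma dcinv_formula x :
  is_dual_core_inverse star a x -> x = star a * w * a ^+ k.+1.
Proof.
move=> Hx.
have xc : x * c = 0 by rewrite -(dcinv_sq_left Hx) -mulrA Hac mulr0.
have vsx : (a ^+ k.+2 * star a + c * star c) * star x = a ^+ k.+2.
  rewrite mulrDl -(mulrA (a ^+ _)) -(mulrA c) -!starM (dcinv_herm Hx) xc star0 mulr0.
  by rewrite addr0 exprSr -mulrA (mulrA a) (dcinv_inner Hx).
have sxx : star x * x = w * a ^+ k.+1.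
  have [_ [_ aax]] := Hx.
  by rewrite -(exprS_mul_inner aax) // -vsx -mulrA mulrA Hw mul1r.
by rewrite -(dcinv_outer Hx) -{1}(dcinv_herm Hx) starM -mulrA sxx mulrA.
Qed.

Lemma is_dcinv_formula :
  (0 < k)%N -> is_dual_core_inverse star a (star a * w * a ^+ k.+1).
Proof.
move=> k_gt0; set x := _ * a ^+ k.+1.
have xE : x = star a ^+ k.+2 * star w.
  by rewrite /x -mulrA inv_intertwine mulrA -exprS.
have axE : a * x = 1 - c * (star c * star w).
  by rewrite xE -mul_starv_starw mulrDl !mulrA addrK.
have aax : a ^+ 2 * x = a.
  by rewrite expr2 -mulrA axE mulrBr mulr1 (mulrA a c) Hac mul0r subr0.
split; last split=> //.
  by rewrite starM {1}xE starM starX !starK /x -mulrA -exprSr mulrA.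
by rewrite expr2 {1}/x -(mulrA _ (a ^+ k.+1)) (exprS_mul_inner aax) // -mulrA -exprSr.
Qed.

End LeftInverse.

End StarRing.

Theorem theorem2p7 (R : unitRingType) (star : R -> R) (a : R) (n : nat)
  (Hstar : involution star) (Hn : (3 <= n)%N) :
  (dual_core_invertible star a <->
     exists c : R, rann_eq_principal a c /\
       (a ^+ n * star a + c * star c) \is a GRing.unit)
  /\
  (forall c x : R, rann_eq_principal a c ->
     (a ^+ n * star a + c * star c) \is a GRing.unit ->
     is_dual_core_inverse star a x ->
     x = star a * (a ^+ n * star a + c * star c)^-1 * a ^+ n.-1).
Proof.
case: n Hn => [|[|[|k]]] // _.
split; last first.
  move=> c x /rann_principal_mul0 Hac /mulVr Hw Hx.
  exact: (dcinv_formula Hstar Hac Hw Hx).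
split=> [[x Hx] | [c [/rann_principal_mul0 Hac /mulVr Hw]]].
  exists (1 - x * a); split; first exact: rann_dcinv Hx.
  apply/unitrP; exists (dcinv_vinv star a x k.+2).
  by rewrite (dcinv_mulVv Hstar Hx) (dcinv_mulvV Hstar Hx).
exact: ex_intro _ _ (is_dcinv_formula Hstar Hac Hw (ltn0Sn k)).
Qed.
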